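(* Let $n_*>2$ be an integer, $\phi:(n_*,+\infty)\to(0,+\infty)$ strictly increasing with $\phi(n_*+1)>1$, and $\mathsf{G}\in\mathbb{G}(n_*,\phi)$. Then for all $\theta,\alpha>0$, $$\mathit{\Theta}(\alpha,\theta)\le n_*^\theta(e^\alpha+1)T_o(\alpha,\theta),$$ where $T_x(\alpha,\theta)=\sum_{y\in\mathsf{V}}[n(y)]^{1+\theta}\exp[-\alpha\rho(x,y)]$.
   Context: $\mathsf{G}=(\mathsf{V},\mathsf{E})$ is a countable, connected, locally finite undirected graph; $n(x)$ is the degree, $\rho$ the path distance, $o\in\mathsf{V}$ a fixed root. $\mathit{\Theta}(\alpha,\theta)=\sum_{x}\sum_{y\sim x}[n(x)n(y)]^\theta\exp[-\alpha\rho(o,x)]$ (values in $[0,\infty]$). For integer $n_*>2$, $\mathsf{V}_*=\{x:n(x)\le n_*\}$, $\mathsf{V}_*^c=\mathsf{V}\setminus\mathsf{V}_*$. For strictly increasing $\phi:(n_*,+\infty)\to(0,+\infty)$, $\mathbb{G}(n_*,\phi)$ is the family of graphs with $\rho(x,y)\ge\phi[\max\{n(x),n(y)\}]$ for all $x,y\in\mathsf{V}_*^c$. *)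

From HB Require Import structures.
From mathcomp Require Import all_boot all_order all_algebra.
From mathcomp Require Import all_classical all_reals all_analysis.
Set Implicit Arguments. Unset Strict Implicit. Unset Printing Implicit Defensive.
Import Order.TTheory GRing.Theory Num.Theory.
Local Open Scope classical_set_scope.
Local Open Scope ring_scope.

(* A locally finite simple undirected graph on a countable vertex type V is
   given by its neighbour lists: nbr x is the (duplicate-free, finite) list of
   neighbours of x.  Adjacency y ~ x means y \in nbr x. *)
Definition simple_lf_graph (V : countType) (nbr : V -> seq V) : Prop :=
  [/\ forall x, uniq (nbr x),
      forall x, x \notin nbr x &
      forall x y, (y \in nbr x) = (x \in nbr y)].

Definition deg (V : countType) (nbr : V -> seq V) (x : V) : nat := size (nbr x).

Definition walk (V : countType) (nbr : V -> seq V) (x y : V) (k : nat) : Prop :=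
  exists p : seq V, [/\ size p = k, path (fun a b => b \in nbr a) x p & last x p = y].

Definition connected_graph (V : countType) (nbr : V -> seq V) : Prop :=
  forall x y, exists k, walk nbr x y k.

(* path distance rho(x,y): the least length of a walk from x to y
   (well defined for connected graphs; defaults to 0 otherwise) *)
Definition rho (V : countType) (nbr : V -> seq V) (x y : V) : nat :=
  xget 0%N [set k | walk nbr x y k /\ forall j, walk nbr x y j -> (k <= j)%N].

Definition Vstar (V : countType) (nbr : V -> seq V) (nstar : nat) : set V :=
  [set x | (deg nbr x <= nstar)%N].

Definition admissible_phi (R : realType) (nstar : nat) (phi : R -> R) : Prop :=
  (forall s t : R, nstar%:R < s -> s < t -> phi s < phi t) /\
  (forall s : R, nstar%:R < s -> 0 < phi s).

Definition in_class (R : realType) (V : countType) (nbr : V -> seq V)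
    (nstar : nat) (phi : R -> R) : Prop :=
  forall x y, x <> y -> ~ Vstar nbr nstar x -> ~ Vstar nbr nstar y ->
    phi (maxn (deg nbr x) (deg nbr y))%:R <= (rho nbr x y)%:R.

Definition Theta (R : realType) (V : countType) (nbr : V -> seq V) (o : V)
    (alpha theta : R) : \bar R :=
  \esum_(x in [set: V]) \esum_(y in [set y | y \in nbr x])
    (((deg nbr x * deg nbr y)%:R `^ theta) * expR (- alpha * (rho nbr o x)%:R))%:E.

Definition Tsum (R : realType) (V : countType) (nbr : V -> seq V) (x : V)
    (alpha theta : R) : \bar R :=
  \esum_(y in [set: V])
    (((deg nbr y)%:R `^ (1 + theta)) * expR (- alpha * (rho nbr x y)%:R))%:E.

From HB Require Import structures.
From mathcomp Require Import all_boot all_order all_algebra.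
From mathcomp Require Import all_classical all_reals all_analysis.
From mathcomp Require Import lra ring.
Set Implicit Arguments. Unset Strict Implicit. Unset Printing Implicit Defensive.
Import Order.TTheory GRing.Theory Num.Theory.
Local Open Scope classical_set_scope.
Local Open Scope ring_scope.

(* Two adjacent vertices cannot both have degree > n_*, since
   phi(max(n(x),n(y))) >= phi(n_*+1) > 1 >= rho(x,y).  So the summand of Theta
   at an oriented edge (x,y) is at most n_*^theta times the weight
   w(z) = n(z)^theta e^(-alpha rho(o,z)) of one endpoint z, with an extra
   factor e^alpha when z = y because rho(o,y) <= rho(o,x) + 1.  Summing over
   oriented edges, which are symmetric, each vertex z is counted n(z) times,
   and n(z) w(z) is the summand of T_o. *)

Lemma esumZl (R : realType) (T : choiceType) (I : set T) (c : R)
    (a : T -> \bar R) :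
  0 <= c -> (forall i, I i -> 0 <= a i)%E ->
  (\esum_(i in I) (c%:E * a i) = c%:E * \esum_(i in I) a i)%E.
Proof.
move=> c_ge0 a_ge0; rewrite /esum -ereal_supZl //; last first.
  by apply/set0P; exists 0%E; exists set0; [exact: fsets_set0 | rewrite fsbig_set0].
rewrite image_comp; congr ereal_sup; apply: eq_imagel => X [finX XI] /=.
rewrite !fsbig_finite // big_seq [in RHS]big_seq ge0_sume_distrr // => i.
by rewrite in_fset_set // inE => /XI /a_ge0.
Qed.

Section walks.
Variables (V : countType) (nbr : V -> seq V).
Hypothesis conn : connected_graph nbr.

Lemma rho_shortest x y : walk nbr x y (rho nbr x y) /\
  forall k, walk nbr x y k -> (rho nbr x y <= k)%N.
Proof.
rewrite /rho; set S := [set k | _]; suff : S (xget 0%N S) by [].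
apply: xgetPex; have [k wk] := conn x y.
have ex : exists k, `[< walk nbr x y k >] by exists k; apply/asboolP.
have [m /asboolP wm m_min] := ex_minnP ex.
by exists m; split => // j /asboolP /m_min.
Qed.

Lemma rho_walk x y : walk nbr x y (rho nbr x y).
Proof. by have [] := rho_shortest x y. Qed.

Lemma rho_min x y k : walk nbr x y k -> (rho nbr x y <= k)%N.
Proof. by have [_] := rho_shortest x y; apply. Qed.

Lemma rho_adj_le1 x y : y \in nbr x -> (rho nbr x y <= 1)%N.
Proof. by move=> xy; apply: rho_min; exists [:: y]; rewrite /= xy. Qed.

Lemma rho_adjS o x y : y \in nbr x -> (rho nbr o y <= (rho nbr o x).+1)%N.
Proof.
move=> xy; apply: rho_min; have [p [sp pp lp]] := rho_walk o x.
by exists (rcons p y); rewrite size_rcons sp rcons_path pp lp last_rcons xy.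
Qed.

End walks.

Section oriented_edges.
Variables (V : countType) (nbr : V -> seq V).
Hypothesis G : simple_lf_graph nbr.

Definition edges : set (V * V) := [set: V] `*`` (fun x => [set y | y \in nbr x]).

Lemma esum_edges_fst (R : realType) (f : V -> R) : (forall x, 0 <= f x) ->
  (\esum_(k in edges) (f k.1)%:E =
   \esum_(x in [set: V]) ((deg nbr x)%:R * f x)%:E)%E.
Proof.
move=> f_ge0; have [uniq_nbr _ _] := G.
rewrite /edges -(esum_esum (a := fun x _ => (f x)%:E)) /=; last first.
  by move=> *; rewrite lee_fin.
apply: eq_esum => x _; rewrite esum_fset; last 2 first.
- exact: finite_seq.
- by move=> *; rewrite lee_fin.
by rewrite -fsbig_seq // sumEFin big_const_seq count_predT iter_addr_0 mulr_natl.
Qed.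

Lemma esum_edges_snd (R : realType) (f : V -> \bar R) :
  (\esum_(k in edges) f k.2 = \esum_(k in edges) f k.1)%E.
Proof.
have [_ _ nbr_sym] := G.
have swap_edges : (fun k : V * V => (k.2, k.1)) @` edges = edges.
  apply/seteqP; split => [_ [[x y] [_ /= xy] <-] | [x y] [_ /= xy]].
    by split => //=; rewrite -nbr_sym.
  by exists (y, x) => //; split => //=; rewrite -nbr_sym.
by rewrite -[in RHS]swap_edges esum_image // => -[a b] [a' b'] _ _ [-> ->].
Qed.

End oriented_edges.

Lemma adj_Vstar (R : realType) (V : countType) (nbr : V -> seq V)
    (nstar : nat) (phi : R -> R) :
  simple_lf_graph nbr -> connected_graph nbr ->
  admissible_phi nstar phi -> 1 < phi (nstar.+1)%:R ->
  in_class nbr nstar phi ->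
  forall x y, y \in nbr x -> Vstar nbr nstar x \/ Vstar nbr nstar y.
Proof.
move=> [_ nbr_irr _] conn [phi_incr _] phi1 cls x y xy.
case: (boolP (deg nbr x <= nstar)%N) => [|hx]; first by left.
case: (boolP (deg nbr y <= nstar)%N) => [|hy]; first by right.
exfalso; have x_neq_y : x <> y.
  by move=> e; move: xy; rewrite -e (negbTE (nbr_irr x)).
have := cls x y x_neq_y (elimN idP hx) (elimN idP hy).
set m := maxn _ _; have m_gt : (nstar < m)%N by rewrite leq_max ltnNge hx.
have phi_le : phi (nstar.+1)%:R <= phi m%:R.
  move: m_gt; rewrite leq_eqVlt => /predU1P[<- // | lt_m].
  by apply/ltW/phi_incr; rewrite ltr_nat.
have rho_le1 : (rho nbr x y)%:R <= 1 :> R.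
  by rewrite -[1]/(1%:R) ler_nat; exact: rho_adj_le1.
by move=> /(le_trans phi_le)/le_trans/(_ rho_le1); rewrite leNgt phi1.
Qed.

Section edge_bound.
Variables (R : realType) (V : countType) (nbr : V -> seq V) (o : V).
Variables (nstar : nat) (alpha theta : R).
Hypotheses (conn : connected_graph nbr).
Hypotheses (alpha_ge0 : 0 <= alpha) (theta_ge0 : 0 <= theta).

Definition vertex_weight (z : V) : R :=
  (deg nbr z)%:R `^ theta * expR (- alpha * (rho nbr o z)%:R).

Lemma vertex_weight_ge0 z : 0 <= vertex_weight z.
Proof. by rewrite mulr_ge0 ?powR_ge0 ?expR_ge0. Qed.

Lemma expR_rho_adj x y : y \in nbr x ->
  expR (- alpha * (rho nbr o x)%:R) <=
  expR alpha * expR (- alpha * (rho nbr o y)%:R).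
Proof.
move=> xy; have rho_le : (rho nbr o y)%:R <= (rho nbr o x)%:R + 1 :> R.
  by rewrite natr1 ler_nat; exact: rho_adjS.
by rewrite -expRD ler_expR; have := ler_wpM2l alpha_ge0 rho_le; lra.
Qed.

Lemma edge_term_le x y : y \in nbr x ->
    Vstar nbr nstar x \/ Vstar nbr nstar y ->
  (deg nbr x * deg nbr y)%:R `^ theta * expR (- alpha * (rho nbr o x)%:R) <=
  nstar%:R `^ theta * (vertex_weight x + expR alpha * vertex_weight y).
Proof.
move=> xy low_end; rewrite /vertex_weight natrM powRM //.
have power_le (d : nat) : (d <= nstar)%N -> d%:R `^ theta <= nstar%:R `^ theta.
  by move=> le_d; apply: ge0_ler_powR; rewrite ?nnegrE ?ler_nat.
have ex_le := expR_rho_adj xy.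
set A := (deg nbr x)%:R `^ theta in power_le *; set B := (deg nbr y)%:R `^ theta.
set ex := expR (- alpha * _) in ex_le *; set ey := expR (- alpha * _) in ex_le *.
have [A_ge0 B_ge0] : 0 <= A /\ 0 <= B by split; exact: powR_ge0.
have [ex_ge0 ey_ge0] : 0 <= ex /\ 0 <= ey by split; exact: expR_ge0.
have c_ge0 : 0 <= nstar%:R `^ theta :> R by exact: powR_ge0.
case: low_end => [/power_le A_le | /power_le B_le].
- rewrite -mulrA; apply: (le_trans (ler_wpM2r (mulr_ge0 B_ge0 ex_ge0) A_le)).
  apply: ler_wpM2l => //; apply: ler_wpDl; first exact: mulr_ge0.
  by rewrite mulrCA ler_wpM2l.
- rewrite [A * B]mulrC -mulrA.
  apply: (le_trans (ler_wpM2r (mulr_ge0 A_ge0 ex_ge0) B_le)).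
  by rewrite ler_wpM2l // ler_wpDr // !mulr_ge0 ?expR_ge0.
Qed.

End edge_bound.

Theorem lemma5p3 (R : realType) (V : countType) (nbr : V -> seq V) (o : V)
    (nstar : nat) (phi : R -> R) :
  simple_lf_graph nbr -> connected_graph nbr ->
  (2 < nstar)%N ->
  admissible_phi nstar phi -> 1 < phi (nstar.+1)%:R ->
  in_class nbr nstar phi ->
  forall theta alpha : R, 0 < theta -> 0 < alpha ->
  (Theta nbr o alpha theta <=
     ((nstar%:R `^ theta) * (expR alpha + 1))%:E * Tsum nbr o alpha theta)%E.
Proof.
move=> G conn _ adm phi1 cls theta alpha /ltW theta_ge0 /ltW alpha_ge0.
set c := nstar%:R `^ theta; set ea := expR alpha.
pose w := vertex_weight nbr o alpha theta.
have c_ge0 : 0 <= c by exact: powR_ge0.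
have ea_ge0 : 0 <= ea by exact: expR_ge0.
have w_ge0 z : 0 <= w z by exact: vertex_weight_ge0.
have edge_le k : edges nbr k ->
    ((((deg nbr k.1 * deg nbr k.2)%:R `^ theta) *
      expR (- alpha * (rho nbr o k.1)%:R))%:E <=
     (c * w k.1)%:E + (c * ea * w k.2)%:E)%E.
  move: k => [x y] [_ /= xy]; rewrite -EFinD lee_fin -mulrA -mulrDr.
  exact: edge_term_le (adj_Vstar G conn adm phi1 cls xy).
rewrite /Theta esum_esum => [|x y _ _]; last first.
  by rewrite lee_fin mulr_ge0 ?powR_ge0 ?expR_ge0.
apply: (le_trans (le_esum edge_le)).
rewrite esumD => [|k _|k _]; rewrite ?lee_fin ?mulr_ge0 //.
rewrite (esum_edges_snd G (fun z => (c * ea * w z)%:E)).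
rewrite (esum_edges_fst G (f := fun z => c * w z))
  ?(esum_edges_fst G (f := fun z => c * ea * w z)) => [|z|z]; rewrite ?mulr_ge0 //.
rewrite -esumD => [|x _|x _]; rewrite ?lee_fin ?mulr_ge0 ?ler0n //.
rewrite /Tsum -esumZl => [||x _];
  rewrite ?lee_fin ?mulr_ge0 ?addr_ge0 ?powR_ge0 ?expR_ge0 //.
apply: le_esum => x _; rewrite -EFinD lee_fin powRD; last by rewrite gt_eqF //; lra.
rewrite powRr1 ?ler0n // /w /vertex_weight le_eqVlt; apply/predU1P; left; ring.
Qed.
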